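(* For the system $$u_{0,0}-v_{1,1}=0,\qquad (u_{1,0}-u_{0,0})(v_{1,0}-u_{0,0})-(u_{0,1}-u_{0,0})(v_{0,1}-u_{0,0})=0,$$ the following second order flow is a symmetry: $$\frac{\partial u_{0,0}}{\partial s_2}=(u_{0,0}-v_{1,0})\big(u_{2,0}v_{2,0}-(u_{2,0}+v_{2,0}-v_{0,0})u_{1,0}+(u_{1,0}-v_{0,0})u_{0,0}\big),$$ $$\frac{\partial v_{0,0}}{\partial s_2}=(u_{-1,0}-v_{0,0})\big(u_{-2,0}v_{-2,0}-(u_{-2,0}+v_{-2,0}-u_{0,0})v_{-1,0}+(v_{-1,0}-u_{0,0})v_{0,0}\big).$$
   Context: Unknowns $u,v$ on $\mathbb Z^2$, $u_{i,j}=u(n+i,m+j)$, similarly $v$. Shifts $\mathcal S:n\mapsto n+1$, $\mathcal T:m\mapsto m+1$. For a quad system $\boldsymbol Q(\boldsymbol u_{0,0},\boldsymbol u_{1,0},\boldsymbol u_{0,1},\boldsymbol u_{1,1})=\boldsymbol 0$ with $\boldsymbol u=(u,v)$ and Jacobians $\mathrm Q_{(p,q)}=\partial\boldsymbol Q/\partial\boldsymbol u_{p,q}$, a vector function $\boldsymbol F=(F^{(1)},F^{(2)})$ of finitely many shifts of $\boldsymbol u$ is a symmetry, written $\partial_t u_{0,0}=F^{(1)}$, $\partial_t v_{0,0}=F^{(2)}$, if $\mathrm Q_{(0,0)}\boldsymbol F+\mathrm Q_{(1,0)}\mathcal S(\boldsymbol F)+\mathrm Q_{(0,1)}\mathcal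 T(\boldsymbol F)+\mathrm Q_{(1,1)}\mathcal S\mathcal T(\boldsymbol F)=\boldsymbol 0$ holds on all solutions of the system. *)

From HB Require Import structures.
From mathcomp Require Import all_boot all_order all_algebra.
Set Implicit Arguments. Unset Strict Implicit. Unset Printing Implicit Defensive.
Import Order.TTheory GRing.Theory Num.Theory.
Local Open Scope ring_scope.

(* Lattice fields on Z^2: u n m = u(n,m); u_{i,j} at (n,m) is u (n+i) (m+j). *)
Definition lattice (R : Type) := int -> int -> R.

Section Sys.
Variable R : numFieldType.
Implicit Types u v : lattice R.

Definition Q1 u v n m : R := u n m - v (n+1)%R (m+1)%R.
Definition Q2 u v n m : R :=
  (u (n+1)%R m - u n m) * (v (n+1)%R m - u n m)
  - (u n (m+1)%R - u n m) * (v n (m+1)%R - u n m).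

Definition is_solution u v : Prop :=
  forall n m, Q1 u v n m = 0 /\ Q2 u v n m = 0.

Definition F1 u v n m : R :=
  (u n m - v (n+1)%R m) *
  (u (n+2)%R m * v (n+2)%R m
   - (u (n+2)%R m + v (n+2)%R m - v n m) * u (n+1)%R m
   + (u (n+1)%R m - v n m) * u n m).
Definition F2 u v n m : R :=
  (u (n-1)%R m - v n m) *
  (u (n-2)%R m * v (n-2)%R m
   - (u (n-2)%R m + v (n-2)%R m - u n m) * v (n-1)%R m
   + (v (n-1)%R m - u n m) * v n m).

(* Symmetry condition
     Q_(0,0) F + Q_(1,0) S(F) + Q_(0,1) T(F) + Q_(1,1) S T(F) = 0
   at (n,m), with the Jacobians Q_(p,q) = dQ/d(u_{p,q},v_{p,q}) of the
   system above written out explicitly: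
   Q1: Q_(0,0) = [1 0], Q_(1,0) = Q_(0,1) = [0 0], Q_(1,1) = [0 -1];
   Q2: Q_(0,0) = [-(v10-u00)-(u10-u00)+(v01-u00)+(u01-u00)  0],
       Q_(1,0) = [v10-u00  u10-u00], Q_(0,1) = [-(v01-u00)  -(u01-u00)],
       Q_(1,1) = [0 0]. *)
Definition linearized_eq1 (G1 G2 : lattice R) u v n m : R :=
  G1 n m - G2 (n+1)%R (m+1)%R.
Definition linearized_eq2 (G1 G2 : lattice R) u v n m : R :=
  let u00 := u n m in
  let u10 := u (n+1)%R m in let v10 := v (n+1)%R m in
  let u01 := u n (m+1)%R in let v01 := v n (m+1)%R in
  (- (v10 - u00) - (u10 - u00) + (v01 - u00) + (u01 - u00)) * G1 n m
  + (v10 - u00) * G1 (n+1)%R m + (u10 - u00) * G2 (n+1)%R m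
  - (v01 - u00) * G1 n (m+1)%R - (u01 - u00) * G2 n (m+1)%R.

Definition is_symmetry (G : lattice R -> lattice R -> lattice R * lattice R)
  : Prop :=
  forall u v, is_solution u v -> forall n m,
    linearized_eq1 (G u v).1 (G u v).2 u v n m = 0 /\
    linearized_eq2 (G u v).1 (G u v).2 u v n m = 0.

Definition flow_s2 u v : lattice R * lattice R := (F1 u v, F2 u v).
End Sys.

From mathcomp Require Import all_boot all_order all_algebra ring.
From Stdlib Require Import FunctionalExtensionality.
Set Implicit Arguments.
Unset Strict Implicit.
Import GRing.Theory.
Local Open Scope ring_scope.

(* The quad system, the flow and the linearized equations are all invariant
   under translations of the lattice Z^2, so it suffices to check the
   symmetry condition at the origin.  On a solution the first equation
   forces v = S^-1 T^-1 u, so after eliminating v every quantity becomes a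
   polynomial in finitely many values u(i,j) with CLOSED integer indices;
   the ring tactic compares such atoms up to computation of the indices.
   The two linearized equations at the origin are then explicit
   combinations, with polynomial coefficients, of the second quad
   relation at the five points (k,0), -2 <= k <= 2 (only the three points
   -1 <= k <= 1 are needed for the first equation). *)

Section Translation.
Variable R : numFieldType.
Implicit Types u v : lattice R.

Definition translate (w : lattice R) (n m : int) : lattice R :=
  fun x y => w (n + x) (m + y).

Lemma translate_solution u v n m :
  is_solution u v -> is_solution (translate u n m) (translate v n m).
Proof. by move=> hs x y; rewrite /Q1 /Q2 /translate !addrA; exact: hs. Qed.

Lemma F1_translate u v n m :
  F1 (translate u n m) (translate v n m) = translate (F1 u v) n m.
Proof.
by apply: functional_extensionality => x; apply: functional_extensionality => y;
  rewrite /F1 /translate !addrA.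
Qed.

Lemma F2_translate u v n m :
  F2 (translate u n m) (translate v n m) = translate (F2 u v) n m.
Proof.
by apply: functional_extensionality => x; apply: functional_extensionality => y;
  rewrite /F2 /translate !addrA.
Qed.

Lemma linearized_eq1_translate (G1 G2 : lattice R) u v n m x y :
  linearized_eq1 (translate G1 n m) (translate G2 n m)
    (translate u n m) (translate v n m) x y =
  linearized_eq1 G1 G2 u v (n + x) (m + y).
Proof. by rewrite /linearized_eq1 /translate !addrA. Qed.

Lemma linearized_eq2_translate (G1 G2 : lattice R) u v n m x y :
  linearized_eq2 (translate G1 n m) (translate G2 n m)
    (translate u n m) (translate v n m) x y =
  linearized_eq2 G1 G2 u v (n + x) (m + y).
Proof. by rewrite /linearized_eq2 /translate !addrA. Qed.

End Translation.

Section AtOrigin.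
Variable R : numFieldType.
Variable u : lattice R.

Definition diag_shift : lattice R := fun x y => u (x - 1) (y - 1).

Lemma solution_diag_shift v : is_solution u v -> v = diag_shift.
Proof.
move=> hs; apply: functional_extensionality => x;
  apply: functional_extensionality => y.
have /eqP := (hs (x - 1) (y - 1)).1.
by rewrite /Q1 !subrK subr_eq0 => /eqP <-.
Qed.

Local Notation p k := (u k (-1)).
Local Notation a k := (u k 0).
Local Notation q k := (u k 1).

Local Notation quad k := (Q2 u diag_shift k 0).

Lemma linearized_eq1_certificate :
  linearized_eq1 (F1 u diag_shift) (F2 u diag_shift) u diag_shift 0 0 =
  (q 0 - a 0) * quad (-1) + (q 1 - p (-1)) * quad 0 + (a 0 - p 0) * quad 1.
Proof. by rewrite /linearized_eq1 /F1 /F2 /Q2 /diag_shift; ring. Qed.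

Lemma linearized_eq2_certificate :
  linearized_eq2 (F1 u diag_shift) (F2 u diag_shift) u diag_shift 0 0 =
  (a (-1) - q (-1)) * (a 0 - q 0) * quad (-2)
  + (p (-2) - q 0) * (a 0 - q 0) * quad (-1)
  + (p (-2) * (p (-1) - a (-1)) - p (-1) * q 0 + (p 1 - a 1) * (a 2 - a 1)
     + a 1 * (a 0 - a 1) + q 1 * (a (-1) - a 0 + q 0) + q 2 * (a 1 - q 1))
    * quad 0
  + ((p 0 - q 0) * (a 0 - a (-1)) + (p 0 - a 0) * (q 2 - q 0)) * quad 1
  + (a 0 - p 0) * (p 1 - a 1) * quad 2.
Proof. by rewrite /linearized_eq2 /F1 /F2 /Q2 /diag_shift; ring. Qed.

End AtOrigin.

Lemma symmetry_at_origin (R : numFieldType) (u v : lattice R) :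
  is_solution u v ->
  linearized_eq1 (F1 u v) (F2 u v) u v 0 0 = 0 /\
  linearized_eq2 (F1 u v) (F2 u v) u v 0 0 = 0.
Proof.
move=> hs; have hquad k : Q2 u (diag_shift u) k 0 = 0.
  by rewrite -(solution_diag_shift hs); exact: (hs k 0).2.
rewrite (solution_diag_shift hs) linearized_eq1_certificate.
by rewrite linearized_eq2_certificate !hquad; split; ring.
Qed.

Theorem mainTheorem10 (R : numFieldType) : is_symmetry (@flow_s2 R).
Proof.
move=> u v hs n m.
have := symmetry_at_origin (translate_solution n m hs).
rewrite F1_translate F2_translate.
by rewrite linearized_eq1_translate linearized_eq2_translate !addr0.
Qed.
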